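(* Let $h$ be a non-degenerate symmetric $(0,2)$-tensor field and $J_1,J_2$ $h$-symmetric $(1,1)$-tensor fields on a smooth manifold $M$ such that $J_i^2=-(\lambda_i+1)I$ for real numbers $\lambda_1,\lambda_2$, and $J_1J_2+J_2J_1=-(\lambda_1+\lambda_2)I$. Define $\hat J_i(X+\eta)=J_iX+\lambda_ih^{-1}(\eta)+h(X)-J_i^*\eta$, $i=1,2$, on $TM\oplus T^*M$. Then $(\hat J_1,\hat J_2,\hat J_1\hat J_2)$ is a generalized almost quaternionic structure on $M$, i.e. $\hat J_1^2=\hat J_2^2=-I$ and $\hat J_1\hat J_2=-\hat J_2\hat J_1$.
   Context: $h$ is viewed as the isomorphism $TM\to T^*M$, $X\mapsto h(X,\cdot)$, with inverse $h^{-1}$; $(J^*\eta)(X)=\eta(JX)$; $J$ is $h$-symmetric if $h(JX,Y)=h(X,JY)$. *)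

From mathcomp Require Import all_boot all_order all_algebra.
Set Implicit Arguments. Unset Strict Implicit. Unset Printing Implicit Defensive.
Import GRing.Theory Num.Theory.
Local Open Scope ring_scope.

(* Fiberwise (local frame) model: at each point of M the tangent space is
   R^n (column vectors 'cV_n), the cotangent space is R^n via dual-basis
   components, a (0,2)-tensor h is an n x n matrix with h(X,Y) = X^T h Y,
   a (1,1)-tensor J is an n x n matrix acting by X |-> J *m X.
   Then h(X) = h *m X (as covector), h^{-1}(eta) = invmx h *m eta and
   J^* eta = J^T *m eta. TM (+) T*M is 'cV_(n+n) via col_mx X eta. *)

Definition hsym (R : comRingType) (n : nat) (h J : 'M[R]_n) : Prop :=
  forall X Y : 'cV[R]_n, (J *m X)^T *m h *m Y = X^T *m h *m (J *m Y).

Definition Jhat (R : comUnitRingType) (n : nat) (h J : 'M[R]_n) (lam : R)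
  : 'M[R]_(n + n) :=
  block_mx J (lam *: invmx h) h (- J^T).

From mathcomp Require Import all_boot all_order all_algebra.
Import GRing.Theory Num.Theory.
Local Open Scope ring_scope.

(* In a frame, hat J is the block matrix [[J, lam h^-1], [h, -J^T]], and
   h-symmetry of J reads J^T h = h J, equivalently J h^-1 = h^-1 J^T.  With
   these, the product of hat J_A and hat J_B has off-diagonal blocks
   h^-1 (b A^T - a B^T) and h (B - A), which vanish when A = B and cancel in
   the anticommutator, and diagonal blocks A B + a and (B A)^T + b.  The
   hypotheses on J_i^2 and on J_1 J_2 + J_2 J_1 turn these into -1 and 0. *)

Lemma hsymP (R : comNzRingType) n (h J : 'M[R]_n) :
  hsym h J <-> J^T *m h = h *m J.
Proof.
split=> [hJ | JhE X Y]; last first.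
  by rewrite trmx_mul -[X^T *m J^T *m h]mulmxA JhE !mulmxA.
apply/matrixP=> i j.
have := hJ (delta_mx i 0) (delta_mx j 0).
rewrite trmx_mul trmx_delta !mulmxA -[_ *m J^T *m h]mulmxA -[_ *m h *m J]mulmxA.
by rewrite -!rowE -!colE => /(congr1 (fun C : 'M[R]_1 => C 0 0)); rewrite !mxE.
Qed.

Section GeneralizedStructure.

Variables (R : comUnitRingType) (n : nat) (h : 'M[R]_n).
Hypothesis h_unit : h \in unitmx.

Lemma mulmx_invmx_hsym J : J^T *m h = h *m J -> J *m invmx h = invmx h *m J^T.
Proof.
move=> JhE; have := congr1 (fun C => invmx h *m C *m invmx h) JhE.
by rewrite /= !mulmxA mulVmx // mul1mx -!mulmxA mulmxV // mulmx1.
Qed.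

Lemma mul_Jhat A B (a b : R) : A^T *m h = h *m A ->
  Jhat h A a *m Jhat h B b =
  block_mx (A *m B + a%:M) (invmx h *m (b *: A^T - a *: B^T))
           (h *m (B - A)) (b%:M + (B *m A)^T).
Proof.
move=> AhE; rewrite /Jhat mulmx_block; congr block_mx.
- by rewrite -scalemxAl mulVmx // scalemx1.
- by rewrite -scalemxAr mulmx_invmx_hsym // mulmxN -scalemxAl mulmxBr !scalemxAr.
- by rewrite mulNmx AhE mulmxBr addrC.
- by rewrite -scalemxAr mulmxV // scalemx1 mulNmx mulmxN opprK trmx_mul.
Qed.

Lemma Jhat_sqr J (lam : R) : J^T *m h = h *m J ->
  J *m J = - (lam + 1) *: 1%:M -> Jhat h J lam *m Jhat h J lam = - 1%:M.
Proof.
move=> JhE JJ; have scalar_sum : - (lam + 1) *: 1%:M + lam%:M = - 1%:M :> 'M_n.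
  by rewrite -(scalemx1 _ lam) -scalerDl opprD addrAC addNr add0r scaleN1r.
rewrite mul_Jhat // JJ scalar_sum !subrr !mulmx0 linearZ /= trmx1 addrC scalar_sum.
by rewrite (scalar_mx_block n n) opp_block_mx !oppr0.
Qed.

Lemma Jhat_anticommute A B (a b : R) : A^T *m h = h *m A -> B^T *m h = h *m B ->
  A *m B + B *m A = - (a + b) *: 1%:M ->
  Jhat h A a *m Jhat h B b = - (Jhat h B b *m Jhat h A a).
Proof.
move=> AhE BhE anticomm; apply/eqP; rewrite -addr_eq0 !mul_Jhat // add_block_mx.
rewrite -(block_mx0 R n n n n); apply/eqP; congr block_mx.
- rewrite addrACA anticomm -(scalemx1 _ a) -(scalemx1 _ b) -!scalerDl.
  by rewrite addNr scale0r.
- by rewrite -mulmxDr addrA subrK subrr mulmx0.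
- by rewrite -mulmxDr addrA subrK subrr mulmx0.
rewrite addrACA -[(B *m A)^T + _]linearD /= [B *m A + _]addrC anticomm.
rewrite linearZ /= trmx1 -(scalemx1 _ a) -(scalemx1 _ b) -!scalerDl.
by rewrite [b + a]addrC subrr scale0r.
Qed.

End GeneralizedStructure.

Theorem proposition3p13 (R : realFieldType) (M : Type) (n : nat)
  (h J1 J2 : M -> 'M[R]_n) (lam1 lam2 : R) :
  (forall p, (h p)^T = h p) ->
  (forall p, h p \in unitmx) ->
  (forall p, hsym (h p) (J1 p)) ->
  (forall p, hsym (h p) (J2 p)) ->
  (forall p, J1 p *m J1 p = - (lam1 + 1) *: 1%:M) ->
  (forall p, J2 p *m J2 p = - (lam2 + 1) *: 1%:M) ->
  (forall p, J1 p *m J2 p + J2 p *m J1 p = - (lam1 + lam2) *: 1%:M) ->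
  forall p,
    let H1 := Jhat (h p) (J1 p) lam1 in
    let H2 := Jhat (h p) (J2 p) lam2 in
    [/\ H1 *m H1 = - 1%:M, H2 *m H2 = - 1%:M & H1 *m H2 = - (H2 *m H1)].
Proof.
move=> _ h_unit J1sym J2sym J1sqr J2sqr anticomm p H1 H2.
have /hsymP J1hE := J1sym p; have /hsymP J2hE := J2sym p.
split; [exact: Jhat_sqr | exact: Jhat_sqr | exact: Jhat_anticommute].
Qed.
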